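(* Let $\mathscr{F}$ be a family of languages closed under rational transduction and Kleene closure, and let $S$ be a finitely generated completely simple semigroup. Then the following are equivalent: (i) the loop problem of $S$ (with respect to a finite semigroup choice of generators) belongs to $\mathscr{F}$; (ii) the loop problem of each maximal subgroup of $S$ (with respect to a finite choice of generators) belongs to $\mathscr{F}$; (iii) the word problem of each maximal subgroup of $S$ (with respect to a finite choice of monoid generators) belongs to $\mathscr{F}$.
   Context: Maps are written on the right. $X^*$, $X^+$: free monoid and free semigroup on $X$. A semigroup is completely simple if it has no proper ideals and has a primitive idempotent (idempotent $e$ such that every idempotent $f$ with $ef = fe = f$ equals $e$); maximal subgroups are subsemigroups that are groups under the inherited multiplication and contained in no larger such; in a finitely generated completely simple semigroup they are finitely generated. For a monoid $M$ and surjective morphism $\sigma : X^* \to M$ ($X$ finite), let $\overline{X} = \{\overline{x} : x \in X\}$ be new symbols, $\hat{X} = X \cup \overline{X}$; the loop automaton has vertex set $M$, for each $a \in M$, $x \in X$ an edge $a \to a(x\sigma)$ labelled $x$ and an edge $a(x\sigma) \to a$ labelled $\overline{x}$; the loop problem $L_\sigma(M) \subseteq \hat{X}^*$ is the set of labels of paths from the identity to the identity. For a semigroup $S$ and surjective $\sigma : X^+ \to S$, the loop problem of $S$ is the loop problem of $S^1$ ($S$ with a new identity adjoined even if one exists) with respect to the extension $X^* \to S^1$. The word problem of a group $G$ with respect to a surjective monoid morphism $\sigma : X^* \to G$ is $\{w \in X^* : w\sigma = 1\}$. A rational transduction is a relation $\rho \subseteq X^* \times Z^*$ ($X, Z$ finite)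 accepted by a finite directed graph with edges labelled in $X^* \times Z^*$, an initial vertex and terminal vertices (pairs labelling initial-to-terminal paths); the image of $L$ is $L\rho = \{v : (u,v)\in\rho, u \in L\}$. The Kleene closure of a language is the submonoid of the free monoid it generates. *)

From mathcomp Require Import all_boot.
Set Implicit Arguments. Unset Strict Implicit. Unset Printing Implicit Defensive.

Definition language (X : finType) := seq X -> Prop.

Definition lang_family := forall X : finType, language X -> Prop.

Inductive trans_acc (X Z Q : finType) (E : seq (Q * seq X * seq Z * Q))
    (fin : pred Q) : Q -> seq X -> seq Z -> Prop :=
  | trans_acc_nil q : fin q -> trans_acc E fin q [::] [::]
  | trans_acc_cons q a b q' u v :
      (q, a, b, q') \in E -> trans_acc E fin q' u v ->
      trans_acc E fin q (a ++ u) (b ++ v).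

Definition rational_transduction (X Z : finType)
    (rho : seq X -> seq Z -> Prop) : Prop :=
  exists (Q : finType) (E : seq (Q * seq X * seq Z * Q)) (q0 : Q) (fin : pred Q),
    forall u v, rho u v <-> trans_acc E fin q0 u v.

Definition trans_image (X Z : finType) (rho : seq X -> seq Z -> Prop)
    (L : language X) : language Z :=
  fun v => exists u, L u /\ rho u v.

Definition closed_under_rational_transduction (F : lang_family) : Prop :=
  forall (X Z : finType) (rho : seq X -> seq Z -> Prop) (L : language X),
    rational_transduction rho -> F X L -> F Z (trans_image rho L).

Definition kleene_star (X : finType) (L : language X) : language X :=
  fun w => exists ws : seq (seq X), (forall u, u \in ws -> L u) /\ flatten ws = w.

Definition closed_under_kleene (F : lang_family) : Prop :=
  forall (X : finType) (L : language X), F X L -> F X (kleene_star L).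

Section Semigroups.
Variables (S : Type) (m : S -> S -> S).

Definition associative_op : Prop := forall a b c, m a (m b c) = m (m a b) c.

Definition is_ideal (I : S -> Prop) : Prop :=
  (exists a, I a) /\ (forall s a, I a -> I (m s a) /\ I (m a s)).

Definition no_proper_ideals : Prop :=
  forall I : S -> Prop, is_ideal I -> forall a, I a.

Definition idempotent (e : S) : Prop := m e e = e.

Definition primitive_idempotent (e : S) : Prop :=
  idempotent e /\
  forall f, idempotent f -> m e f = f -> m f e = f -> f = e.

Definition completely_simple : Prop :=
  no_proper_ideals /\ exists e, primitive_idempotent e.

Definition subgroup_with_id (H : S -> Prop) (e : S) : Prop :=
  H e /\
  (forall a b, H a -> H b -> H (m a b)) /\
  (forall a, H a -> m e a = a /\ m a e = a) /\
  (forall a, H a -> exists b, H b /\ m a b = e /\ m b a = e).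

Definition is_subgroup (H : S -> Prop) : Prop := exists e, subgroup_with_id H e.

Definition maximal_subgroup (H : S -> Prop) : Prop :=
  is_subgroup H /\
  forall K : S -> Prop, is_subgroup K -> (forall a, H a -> K a) ->
    forall a, K a -> H a.

Definition eval_from (X : Type) (g : X -> S) (a : S) (w : seq X) : S :=
  foldl (fun b x => m b (g x)) a w.

(* g : X -> S induces a surjective morphism X^+ -> S. *)
Definition sgp_generates (X : Type) (g : X -> S) : Prop :=
  forall a, exists (x : X) (w : seq X), eval_from g (g x) w = a.

(* For a monoid with carrier V (a predicate on S) and identity e:
   g : X -> V induces a surjective monoid morphism X^* -> V. *)
Definition mon_generates (V : S -> Prop) (e : S) (X : Type) (g : X -> S) : Prop :=
  (forall x, V (g x)) /\ forall a, V a -> exists w : seq X, eval_from g e w = a.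

(* Paths in the loop automaton of a monoid with vertex set V and generator
   map g.  Letters: inl x = x,  inr x = \overline{x}.
   An edge a --x--> a(xg) and an edge a(xg) --\bar x--> a, for a in V. *)
Inductive lpath (V : S -> Prop) (X : Type) (g : X -> S) : S -> seq (X + X) -> S -> Prop :=
  | lpath_nil a : V a -> lpath V g a [::] a
  | lpath_fwd a x w b : V a -> lpath V g (m a (g x)) w b -> lpath V g a (inl x :: w) b
  | lpath_bwd a x w b : V a -> lpath V g a w b -> lpath V g (m a (g x)) (inr x :: w) b.

Definition monoid_loop_problem (V : S -> Prop) (e : S) (X : finType) (g : X -> S)
  : language (X + X)%type := fun w => lpath V g e w e.

Definition group_word_problem (e : S) (X : finType) (g : X -> S) : language X :=
  fun w => eval_from g e w = e.

End Semigroups.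

(* S^1: S with a new identity None adjoined. *)
Definition adjoin1 (S : Type) (m : S -> S -> S) (a b : option S) : option S :=
  match a, b with
  | None, _ => b
  | _, None => a
  | Some x, Some y => Some (m x y)
  end.

(* Loop problem of the semigroup S w.r.t. g : X -> S (generating S as a
   semigroup): loop problem of S^1 w.r.t. the extension X^* -> S^1. *)
Definition semigroup_loop_problem (S : Type) (m : S -> S -> S) (X : finType)
    (g : X -> S) : language (X + X)%type :=
  monoid_loop_problem (adjoin1 m) (fun _ => True) None (fun x => Some (g x)).

(* Let H be a maximal subgroup of S with identity e; all maximal subgroups have
   the form H_e = eSe, and by the Rees theorem S^1 is pictured as a matrix of
   cells indexed by rows and columns.

   (i) -> (ii): spell e and every generator of H as a word over X.  A path of
   the loop automaton of S^1 that starts at e and reads spelled generators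
   stays (up to the identity) in the R-class of e, and right multiplication by
   e maps it onto a path of H.  Hence a word is a loop of H iff its spelling,
   framed by the spellings of e and of its formal inverse, is a loop of S^1,
   and this framing relation is rational.

   (ii) <-> (iii): in a group the backward edges are the forward edges of the
   inverses, so loop problems are word problems over a doubled alphabet, and
   the word problem is the set of positive loops.

   (ii) -> (i): a loop of S^1 at 1 is a product of excursions that leave 1 and
   return to it.  Along an excursion started by the letter x1 the current
   element c stays in the row of g x1, so it is determined by its column and
   by the element e c e of H_e.  A finite transducer whose states record x1
   and the current column thus translates loops of H_e (over Schreier-type
   generators) into excursions, and the loop problem of S is the Kleene
   closure of a rational image of the loop problem of H_e. *)

From Pilot Require Import Defs.
From mathcomp Require Import all_boot.
From Stdlib Require Import ClassicalEpsilon FunctionalExtensionality PropExtensionality.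

Set Implicit Arguments. Unset Strict Implicit. Unset Printing Implicit Defensive.

Section SimpleSemigroup.
Variables (S : Type) (m : S -> S -> S).
Hypothesis mA : associative_op m.
Local Infix "**" := m (at level 40, left associativity).

Lemma eq_mulA a b c : a ** b = c -> forall z, a ** (b ** z) = c ** z.
Proof. by move=> <- z; rewrite mA. Qed.

Lemma simple_factor : no_proper_ideals m -> forall a b, exists x y, b = x ** (a ** y).
Proof.
move=> Hn a; apply: (Hn (fun b => exists x y, b = x ** (a ** y))).
split; first by exists (a ** (a ** a)), a, a.
move=> s c [x [y ->]]; split; first by exists (s ** x), y; rewrite mA.
by exists x, (y ** s); rewrite -!mA.
Qed.

Section Primitive.
Hypothesis simpleS : no_proper_ideals m.
Variable e : S.
Hypothesis e_prim : primitive_idempotent m e.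

Let ee : e ** e = e := proj1 e_prim.

(* If [e = p a q] then [a (q p)] and [(q p) a] are idempotents below [e]. *)
Lemma primitive_inverse a : e ** a = a -> a ** e = a ->
  exists w, [/\ w ** e = w, a ** w = e & w ** a = e].
Proof.
move=> ea ae; have [x [y Exy]] := simple_factor simpleS a e.
set p := e ** x ** e; set q := e ** y ** e.
have Epq : e = p ** a ** q.
  by rewrite /p /q -!mA (eq_mulA ae) (eq_mulA ea) (mA a) (mA x) -Exy !ee.
have pe : p ** e = p by rewrite /p -!mA ee.
have ep : e ** p = p by rewrite /p !mA ee.
have qe : q ** e = q by rewrite /q -!mA ee.
have eq : e ** q = q by rewrite /q !mA ee.
clearbody p q; exists (q ** p); split; first by rewrite -mA pe.
- apply: (proj2 e_prim).
  + by rewrite /Defs.idempotent -!mA (mA a q p) (mA p (a ** q) p) (mA p a q) -Epq ep.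
  + by rewrite mA ea.
  + by rewrite -!mA pe.
- apply: (proj2 e_prim).
  + by rewrite /Defs.idempotent -!mA (mA a q (p ** a)) (mA p (a ** q)) (mA p a q)
      -Epq (mA e p a) ep.
  + by rewrite !mA eq.
  + by rewrite -!mA ae.
Qed.

Lemma primitive_right_unit b : e ** b = b -> exists t, b ** t = e.
Proof.
move=> eb; have [x [y Exy]] := simple_factor simpleS b e.
set c := e ** x ** e.
have [v [ve cv vc]] : exists v, [/\ v ** e = v, c ** v = e & v ** c = e].
  by apply: primitive_inverse; rewrite /c -!mA ?ee // (eq_mulA ee).
have Ee : e = c ** (b ** (y ** e)).
  by rewrite /c -!mA (eq_mulA eb) (mA b y e) (mA x (b ** y) e) -Exy !ee.
have Ev : v = b ** (y ** e) by rewrite -ve {1}Ee mA vc mA eb.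
by exists (y ** (e ** c)); rewrite (mA y e c) (mA b (y ** e) c) -Ev vc.
Qed.

End Primitive.

Hypothesis csS : completely_simple m.

Lemma mul_right_return c s : exists t, c ** (s ** t) = c.
Proof.
have [simpleS [e e_prim]] := csS; have ee : e ** e = e := proj1 e_prim.
have [p [q Ec]] := simple_factor simpleS e c.
have [t Ht] : exists t, e ** q ** s ** t = e.
  by apply: (primitive_right_unit simpleS e_prim); rewrite !mA ee.
exists (t ** (e ** q)); rewrite Ec -!mA.
have -> : q ** (s ** (t ** (e ** q))) = q ** (s ** t) ** (e ** q) by rewrite -!mA.
by rewrite -!mA in Ht; rewrite (mA e (q ** (s ** t))) Ht (eq_mulA ee).
Qed.

Lemma left_unit_mulr e c s : e ** (c ** s) = c ** s -> e ** c = c.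
Proof.
move=> ecs; have [t Ht] := mul_right_return c s.
by rewrite -{1}Ht (mA c s t) (mA e (c ** s) t) ecs -mA Ht.
Qed.

End SimpleSemigroup.

Definition opp_op (S : Type) (m : S -> S -> S) : S -> S -> S := fun a b => m b a.

Lemma associative_opp (S : Type) (m : S -> S -> S) :
  associative_op m -> associative_op (opp_op m).
Proof. by move=> mA a b c; rewrite /opp_op mA. Qed.

Lemma completely_simple_opp (S : Type) (m : S -> S -> S) :
  completely_simple m -> completely_simple (opp_op m).
Proof.
move=> [simpleS [e [ee e_prim]]]; split.
  move=> I [[a Ia] IidE] b; apply: (simpleS I); split; first by exists a.
  by move=> s c /(IidE s) [].
by exists e; split=> // f ff fe ef; apply: e_prim.
Qed.

Definition local_group (S : Type) (m : S -> S -> S) (e a : S) : Prop :=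
  m e a = a /\ m a e = a.

Section CompletelySimple.
Variables (S : Type) (m : S -> S -> S).
Hypotheses (mA : associative_op m) (csS : completely_simple m).
Local Infix "**" := m (at level 40, left associativity).

Let mAopp := associative_opp mA.
Let csSopp := completely_simple_opp csS.

Lemma mul_left_return c s : exists t, t ** (s ** c) = c.
Proof.
by have [t Ht] := mul_right_return mAopp csSopp c s; exists t; rewrite mA.
Qed.

Lemma right_unit_mull e c s : s ** c ** e = s ** c -> c ** e = c.
Proof.
by move=> sce; apply: (left_unit_mulr mAopp csSopp (s := s)); rewrite /opp_op.
Qed.

Section LocalGroup.
Variable e : S.
Hypothesis ee : e ** e = e.

Lemma local_group_corner b : local_group m e (e ** b ** e).
Proof. by split; rewrite ?(mA e) -mA ee. Qed.

Lemma local_group_inverse a : local_group m e a ->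
  exists w, [/\ local_group m e w, a ** w = e & w ** a = e].
Proof.
move=> [ea ae].
have [t] := mul_right_return mA csS e a; rewrite mA ea => at_.
have [t'] := mul_left_return e a; rewrite ae => t'a.
have w'a : e ** t' ** e ** a = e by rewrite -(mA _ e a) ea -mA t'a ee.
have aw : a ** (e ** t ** e) = e by rewrite !mA ae at_ ee.
have ww' : e ** t' ** e = e ** t ** e.
  rewrite -[LHS](proj2 (local_group_corner t')) -[X in _ ** X = _]aw.
  by rewrite mA w'a (proj1 (local_group_corner t)).
by exists (e ** t ** e); split=> //; [apply: local_group_corner | rewrite -ww'].
Qed.

Lemma local_group_subgroup : subgroup_with_id m (local_group m e) e.
Proof.
split=> //; split.
  by move=> a b [ea ae] [eb be]; split; rewrite ?mA ?ea -?mA ?be.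
split=> [a aK //|a /local_group_inverse [w [wK aw wa]]].
by exists w.
Qed.

Lemma local_group_maximal : maximal_subgroup m (local_group m e).
Proof.
split; first by exists e; apply: local_group_subgroup.
move=> K [f [Kf [_ [Kid Kinv]]]] HK a Ka.
have [b [_ [eb _]]] := Kinv e (HK e (conj ee ee)).
have fe : f = e by rewrite -eb -{1}ee -mA eb (proj2 (Kid e (HK e (conj ee ee)))).
by rewrite -fe; apply: Kid.
Qed.

Lemma local_group_cancel b q : local_group m e b -> local_group m e q -> b ** q = b -> q = e.
Proof.
move=> bK [eq _] bq; have [w [_ _ wb]] := local_group_inverse bK.
by rewrite -eq -wb -mA bq.
Qed.

(* In Rees-matrix coordinates [r] is the idempotent in the row of [e] and the
   column of [a]. *)
Lemma right_connector a : exists r, [/\ e ** r = r, r ** e = e & a ** r = a].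
Proof.
have [t aet] := mul_right_return mA csS a e.
exists (e ** t); split=> //; first by rewrite mA ee.
apply: (local_group_cancel (local_group_corner a) (local_group_corner t)).
by rewrite -!mA (eq_mulA mA ee) (mA e t e) (mA a) aet.
Qed.

End LocalGroup.
End CompletelySimple.

Lemma left_connector (S : Type) (m : S -> S -> S) :
  associative_op m -> completely_simple m -> forall e, m e e = e ->
  forall a, exists u, [/\ m u e = u, m e u = e & m u a = a].
Proof.
move=> mA csS e ee a.
exact: (right_connector (associative_opp mA) (completely_simple_opp csS) ee a).
Qed.

Lemma local_group_sub_maximal (S : Type) (m : S -> S -> S) (H : S -> Prop) (e : S) :
  associative_op m -> completely_simple m ->
  maximal_subgroup m H -> subgroup_with_id m H e -> forall a, local_group m e a -> H a.
Proof.
move=> mA csS [_ Hmax] [He [_ [Hid _]]].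
apply: Hmax => [|a /Hid //]; exists e.
by apply: local_group_subgroup => //; case: (Hid e He).
Qed.

Section LoopPaths.
Variables (S : Type) (m : S -> S -> S) (V : S -> Prop) (X : Type) (g : X -> S).
Local Notation path := (lpath m V g).

Lemma lpath_nilE a b : path a [::] b -> a = b.
Proof. by move=> p; inversion p. Qed.

Lemma lpath_fwdE a x w b : path a (inl x :: w) b -> path (m a (g x)) w b.
Proof. by move=> p; inversion p. Qed.

Lemma lpath_bwdE a x w b : path a (inr x :: w) b ->
  exists2 a', a = m a' (g x) & path a' w b.
Proof. by move=> p; inversion p; subst; exists a0. Qed.

Lemma lpath_cat a w1 b w2 c : path a w1 b -> path b w2 c -> path a (w1 ++ w2) c.
Proof.
elim=> {a w1 b} [a Va|a x w b Va _ IH|a x w b Va _ IH] p2 //=.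
- by apply: lpath_fwd => //; apply: IH.
- by apply: lpath_bwd => //; apply: IH.
Qed.

Hypothesis V_step : forall a x, V a -> V (m a (g x)).

Lemma lpath_head a w b : path a w b -> V a.
Proof. by case: a w b / => // a x w b /V_step. Qed.

Lemma lpath_catE w1 w2 a c : path a (w1 ++ w2) c ->
  exists b, path a w1 b /\ path b w2 c.
Proof.
elim: w1 a => [|[x|x] w1 IH] a /= p.
- by exists a; split=> //; apply/lpath_nil/(lpath_head p).
- have [b [p1 p2]] := IH _ (lpath_fwdE p).
  by exists b; split=> //; apply: lpath_fwd (lpath_head p) p1.
- have [a' -> /IH [b [p1 p2]]] := lpath_bwdE p.
  by exists b; split=> //; apply: lpath_bwd (lpath_head p1) p1.
Qed.

Lemma lpath_inlE v a b : V a -> path a (map inl v) b <-> b = eval_from m g a v.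
Proof.
elim: v a => [|x v IH] a Va /=.
  by split=> [/lpath_nilE //|->]; apply: lpath_nil.
split=> [/lpath_fwdE /IH -> //|/IH p]; first exact: V_step.
by apply: lpath_fwd Va (p (V_step x Va)).
Qed.

Lemma lpath_inrE v a b : V b -> path a (map inr (rev v)) b <-> a = eval_from m g b v.
Proof.
elim: v a b => [|x v IH] a b Vb.
  by split=> [/lpath_nilE //|->]; apply: lpath_nil.
rewrite rev_cons -cats1 map_cat; split.
  move=> /lpath_catE [c [p1 /lpath_bwdE [a' ca' /lpath_nilE a'b]]].
  by subst c a'; move/(IH _ _ (V_step x Vb)): p1.
move=> ->; apply: lpath_cat (_ : path _ _ (m b (g x))) _; first exact/(IH _ _ (V_step x Vb)).
by apply: lpath_bwd Vb (lpath_nil _ _ Vb).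
Qed.

End LoopPaths.

Lemma eval_mul (S X : Type) (m : S -> S -> S) (g : X -> S) :
  associative_op m -> forall a b w, eval_from m g (m a b) w = m a (eval_from m g b w).
Proof. by move=> mA a b w; elim: w b => [|x w IH] b //=; rewrite -mA IH. Qed.

Lemma adjoin1_assoc (S : Type) (m : S -> S -> S) :
  associative_op m -> associative_op (adjoin1 m).
Proof. by move=> mA [a|] [b|] [c|] //=; rewrite mA. Qed.

Section AdjoinOne.
Variables (S X : Type) (m : S -> S -> S) (g : X -> S).
Local Notation m1 := (adjoin1 m).
Local Notation g1 := (fun x => Some (g x)).

Lemma eval_adjoin1_Some c w : eval_from m1 g1 (Some c) w = Some (eval_from m g c w).
Proof. by elim: w c => [|x w IH] c //=; rewrite IH. Qed.

Lemma eval_adjoin1 : associative_op m ->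
  forall a w, eval_from m1 g1 a w = m1 a (eval_from m1 g1 None w).
Proof. by move=> mA a w; rewrite -(eval_mul _ (adjoin1_assoc mA)); case: a. Qed.

Lemma exists_words : sgp_generates m g ->
  exists word : S -> seq X, forall a, eval_from m1 g1 None (word a) = Some a.
Proof.
move=> gen; apply: (choice (fun a w => eval_from m1 g1 None w = Some a)) => a.
by have [x [w <-]] := gen a; exists (x :: w); exact: eval_adjoin1_Some.
Qed.

End AdjoinOne.

Lemma lang_ext (X : finType) (L1 L2 : language X) : (forall w, L1 w <-> L2 w) -> L1 = L2.
Proof.
by move=> L12; apply: functional_extensionality => w; apply: propositional_extensionality.
Qed.

Lemma trans_acc_cons_eq (X Z Q : finType) (E : seq (Q * seq X * seq Z * Q)) fin
    q a b q' u v u' v' :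
  (q, a, b, q') \in E -> trans_acc E fin q' u v -> u' = a ++ u -> v' = b ++ v ->
  trans_acc E fin q u' v'.
Proof. by move=> qq' acc -> ->; apply: trans_acc_cons qq' acc. Qed.

Definition hom_rel (X Z : finType) (pre suf : seq X) (f : Z -> seq X)
    (u : seq X) (v : seq Z) : Prop :=
  u = pre ++ flatten (map f v) ++ suf.

Section HomRel.
Variables (X Z : finType) (pre suf : seq X) (f : Z -> seq X).

(* States: [None] initial, [Some false] reading [f v], [Some true] final. *)
Definition hom_edges : seq (option bool * seq X * seq Z * option bool) :=
  [:: (None, pre, [::], Some false); (Some false, suf, [::], Some true)] ++
  [seq (Some false, f z, [:: z], Some false) | z <- enum Z].

Definition hom_final : pred (option bool) := pred1 (Some true).

Lemma hom_edgesP q a b q' : (q, a, b, q') \in hom_edges ->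
  [\/ [/\ q = None, a = pre, b = [::] & q' = Some false],
      [/\ q = Some false, a = suf, b = [::] & q' = Some true] |
      exists z, [/\ q = Some false, a = f z, b = [:: z] & q' = Some false]].
Proof.
rewrite !inE => /orP [/eqP [-> -> -> ->]|/orP [/eqP [-> -> -> ->]|]].
- by constructor 1.
- by constructor 2.
- by move=> /mapP [z _ [-> -> -> ->]]; constructor 3; exists z.
Qed.

Lemma hom_acc q u v : trans_acc hom_edges hom_final q u v ->
  [/\ q = None -> hom_rel pre suf f u v,
      q = Some false -> u = flatten (map f v) ++ suf &
      q = Some true -> u = [::] /\ v = [::]].
Proof.
elim=> {q u v} [q /eqP -> //|q a b q' u v /hom_edgesP qq' _ [IH1 IH2 IH3]].
case: qq' => [[? ? ? ?]|[? ? ? ?]|[z [? ? ? ?]]]; subst; split=> // _.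
- by rewrite /hom_rel IH2.
- by have [-> ->] := IH3 erefl; rewrite cats0.
- by rewrite IH2 // catA.
Qed.

Lemma rational_hom_rel : rational_transduction (hom_rel pre suf f).
Proof.
exists (option bool : finType), hom_edges, None, hom_final => u v; split.
  move=> ->; apply: (trans_acc_cons_eq (a := pre) (b := [::]) (q' := Some false)) => //.
    by rewrite !inE eqxx.
  elim: v => [|z v IH] /=.
    apply: (trans_acc_cons_eq (a := suf) (b := [::]) (q' := Some true) (u := [::]) (v := [::])).
    - by rewrite !inE eqxx orbT.
    - exact: trans_acc_nil.
    - by rewrite cats0.
    - by [].
  apply: (trans_acc_cons_eq (a := f z) (b := [:: z]) _ IH) => //; last by rewrite catA.
  by rewrite mem_cat; apply/orP; right; apply/mapP; exists z; rewrite ?mem_enum.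
by move=> /hom_acc [+ _ _]; apply.
Qed.

End HomRel.

Definition signed (S Y : Type) (h inv : Y -> S) (z : Y + Y) : S :=
  match z with inl y => h y | inr y => inv y end.

Section SubgroupProblems.
Variables (S : Type) (m : S -> S -> S) (H : S -> Prop) (e : S).
Variables (Y : finType) (h : Y -> S).
Hypotheses (mA : associative_op m) (He : subgroup_with_id m H e).
Hypothesis hH : forall y, H (h y).
Local Infix "**" := m (at level 40, left associativity).

Let H_e : H e := proj1 He.
Let H_mul : forall a b, H a -> H b -> H (a ** b) := proj1 (proj2 He).
Let H_unit : forall a, H a -> e ** a = a /\ a ** e = a := proj1 (proj2 (proj2 He)).

Lemma group_word_problem_image :
  group_word_problem m e h =
  trans_image (hom_rel [::] [::] (fun y => [:: inl y])) (monoid_loop_problem m H e h).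
Proof.
have H_step a y : H a -> H (a ** h y) by move=> Ha; apply: H_mul.
have pathE v b : lpath m H h e (map inl v) b <-> b = eval_from m h e v.
  exact: (lpath_inlE H_step).
apply: lang_ext => v; split=> [ev | [u [Lu Eu]]].
  by exists (map inl v); rewrite /hom_rel /= cats0 flatten_map1; split=> //; apply/pathE.
by move: Lu; rewrite Eu /= cats0 flatten_map1 => /pathE/esym.
Qed.

Variable inv : Y -> S.
Hypothesis inv_h : forall y, [/\ H (inv y), h y ** inv y = e & inv y ** h y = e].

Lemma lpath_signed w a b : H a -> lpath m H h a w b <-> b = eval_from m (signed h inv) a w.
Proof.
have H_step a' y : H a' -> H (a' ** h y) by move=> Ha'; apply: H_mul.
elim: w a => [|[y|y] w IH] a Ha /=.
- by split=> [p | ->]; [rewrite (lpath_nilE p) | apply: lpath_nil].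
- have Hay : H (a ** h y) by apply: H_mul.
  split=> p; first exact/(IH _ Hay)/(lpath_fwdE p).
  by apply: lpath_fwd Ha _; apply/(IH _ Hay).
- have [Hi hi ih] := inv_h y; have Hai : H (a ** inv y) by apply: H_mul.
  split=> p.
    have [a' aE {}p] := lpath_bwdE p; have Ha' := lpath_head H_step p.
    have -> : a ** inv y = a' by rewrite aE -mA hi (proj2 (H_unit Ha')).
    exact/(IH _ Ha').
  have aE : a ** inv y ** h y = a by rewrite -mA ih (proj2 (H_unit Ha)).
  by rewrite -{1}aE; apply: lpath_bwd; [exact: Hai | apply/(IH _ Hai)].
Qed.

Lemma monoid_loop_problem_signed :
  monoid_loop_problem m H e h = group_word_problem m e (signed h inv).
Proof.
apply: lang_ext => w; rewrite /monoid_loop_problem /group_word_problem.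
by rewrite (lpath_signed _ _ H_e); split=> /esym.
Qed.

Lemma mon_generates_signed :
  mon_generates m H e h -> mon_generates m H e (signed h inv).
Proof.
move=> [_ gen]; split=> [[y|y] /= | a /gen [w <-]]; [exact: hH | by case: (inv_h y) |].
exists (map inl w).
by elim: w (e) => //= y w IH b; rewrite IH.
Qed.

End SubgroupProblems.

Section SubgroupFromSemigroup.
Variables (S : Type) (m : S -> S -> S) (X : finType) (g : X -> S).
Hypotheses (mA : associative_op m) (csS : completely_simple m).
Local Infix "**" := m (at level 40, left associativity).
Local Notation m1 := (adjoin1 m).
Local Notation g1 := (fun x => Some (g x)).
Local Notation path1 := (lpath m1 (fun _ => True) g1).

Variable word : S -> seq X.
Hypothesis word_eval : forall a, eval_from m1 g1 None (word a) = Some a.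

Let path1_catE := @lpath_catE _ m1 (fun _ => True) _ g1 (fun _ _ _ => I).

Lemma eval_word b a : eval_from m1 g1 b (word a) = m1 b (Some a).
Proof. by rewrite eval_adjoin1 // word_eval. Qed.

Lemma path1_word b a c : path1 b (map inl (word a)) c <-> c = m1 b (Some a).
Proof. by rewrite -eval_word; apply: lpath_inlE. Qed.

Lemma path1_word_rev b a c : path1 b (map inr (rev (word a))) c <-> b = m1 c (Some a).
Proof. by rewrite -eval_word; apply: lpath_inrE. Qed.

Variables (H : S -> Prop) (e : S) (Y : finType) (h : Y -> S).
Hypotheses (Hmax : maximal_subgroup m H) (He : subgroup_with_id m H e).
Hypothesis hgen : mon_generates m H e h.

Let e_unit : forall a, H a -> e ** a = a /\ a ** e = a := proj1 (proj2 (proj2 He)).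
Let ee : e ** e = e := proj1 (e_unit (proj1 He)).
Let hK y : local_group m e (h y) := e_unit (proj1 hgen y).
Let local_H : forall a, local_group m e a -> H a := local_group_sub_maximal mA csS Hmax He.

Definition spell (z : Y + Y) : seq (X + X) :=
  match z with
  | inl y => map inl (word (h y))
  | inr y => map inr (rev (word (h y)))
  end.

(* The vertices [Some c] with [e c = c] form the R-class of [e], which right
   multiplication by [e] maps onto [H].  A backward letter may lead from this
   R-class to the identity [None], which [project] sends to [e]. *)
Definition left_fixed (a : option S) : Prop :=
  a = None \/ exists2 c, a = Some c & e ** c = c.

Definition project (a : option S) : S := if a is Some c then c ** e else e.

Lemma project_local a : left_fixed a -> local_group m e (project a).
Proof. by case=> [->|[c -> ec]] //=; split; rewrite -?mA ?ee // mA ec. Qed.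

Lemma left_fixed_step a y : left_fixed a ->
  left_fixed (m1 a (Some (h y))) /\ project (m1 a (Some (h y))) = project a ** h y.
Proof.
have [ehy hye] := hK y.
case=> [->|[c -> ec]] /=; first by split; [right; exists (h y) | rewrite ehy hye].
by split; [right; exists (c ** h y); rewrite ?mA ?ec | rewrite -!mA ehy hye].
Qed.

Lemma left_fixed_unstep a y : left_fixed (m1 a (Some (h y))) -> left_fixed a.
Proof.
case: a => [c|] /=; last by left.
case=> [//|[_ [<-] ec]]; right; exists c => //.
exact: (left_unit_mulr mA csS ec).
Qed.

Lemma lpath_project v a b : left_fixed a -> path1 a (flatten (map spell v)) b ->
  left_fixed b /\ lpath m H h (project a) v (project b).
Proof.
elim: v a => [|z v IH] a fa /=.
  move=> p; rewrite -(lpath_nilE p).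
  by split=> //; apply/lpath_nil/local_H/project_local.
move=> /path1_catE [c []].
case: z => y /=.
  move=> /path1_word -> /(IH _ (proj1 (left_fixed_step y fa))) [fb pv].
  split=> //; apply: lpath_fwd; first exact/local_H/project_local.
  by rewrite -(proj2 (left_fixed_step y fa)).
move=> /path1_word_rev aE; subst a.
have fc := left_fixed_unstep fa.
move=> /(IH _ fc) [fb pv]; split=> //; rewrite (proj2 (left_fixed_step y fc)).
by apply: lpath_bwd pv; apply/local_H/project_local.
Qed.

Lemma lpath_spell v a b : lpath m H h a v b -> path1 (Some a) (flatten (map spell v)) (Some b).
Proof.
elim=> {a v b} [a _|a y v b _ _ IH|a y v b _ _ IH] /=; first exact: lpath_nil.
- by apply: lpath_cat IH; apply/path1_word.
- by apply: lpath_cat IH; apply/path1_word_rev.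
Qed.

Lemma subgroup_loop_problem_image :
  monoid_loop_problem m H e h =
  trans_image (hom_rel (map inl (word e)) (map inr (rev (word e))) spell)
    (semigroup_loop_problem m g).
Proof.
apply: lang_ext => v; split.
  move=> pv; eexists; split; last by reflexivity.
  apply: lpath_cat (_ : path1 None _ (Some e)) _; first exact/path1_word.
  apply: lpath_cat (lpath_spell pv) _; exact/path1_word_rev.
move=> [u [pu uE]]; rewrite /hom_rel in uE; subst u.
have [c1 [/path1_word -> /= {c1}]] := path1_catE pu.
move=> /path1_catE [c2 [pv /path1_word_rev /= c2E]]; subst c2.
have [_] := lpath_project (or_intror (ex_intro2 _ _ e erefl ee)) pv.
by rewrite /= ee.
Qed.

End SubgroupFromSemigroup.

Definition decide (P : Prop) : bool := if excluded_middle_informative P then true else false.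

Lemma decideP (P : Prop) : reflect P (decide P).
Proof. by rewrite /decide; case: excluded_middle_informative => ?; constructor. Qed.

Section SemigroupFromSubgroup.
Variables (S : Type) (m : S -> S -> S) (X : finType) (g : X -> S).
Hypotheses (mA : associative_op m) (csS : completely_simple m).
Hypothesis gen : sgp_generates m g.
Local Infix "**" := m (at level 40, left associativity).
Local Notation m1 := (adjoin1 m).
Local Notation g1 := (fun x => Some (g x)).
Local Notation path1 := (lpath m1 (fun _ => True) g1).

Variables (e : S) (r u : X -> S).
Hypothesis ee : e ** e = e.
Hypothesis r_conn : forall x, [/\ e ** r x = r x, r x ** e = e & g x ** r x = g x].
Hypothesis u_conn : forall x, [/\ u x ** e = u x, e ** u x = e & u x ** g x = g x].
Variables (col row : rel X).
Hypothesis colP : forall x l, reflect (g x ** r l = g x) (col x l).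
Hypothesis rowP : forall x1 x, reflect (u x1 ** g x = g x) (row x1 x).

Local Notation K := (local_group m e).

Let er x : e ** r x = r x. Proof. by case: (r_conn x). Qed.
Let re x : r x ** e = e. Proof. by case: (r_conn x). Qed.
Let gr x : g x ** r x = g x. Proof. by case: (r_conn x). Qed.
Let ue x : u x ** e = u x. Proof. by case: (u_conn x). Qed.
Let eu x : e ** u x = e. Proof. by case: (u_conn x). Qed.
Let ug x : u x ** g x = g x. Proof. by case: (u_conn x). Qed.

Definition corner (c : S) : S := e ** c ** e.

(* Schreier-type generators of [K]: reading [x] from a vertex in the column
   of [g l] multiplies its corner by [r l g x e] (lemma [corner_mul]). *)
Definition gen_index : finType := ((X * X) + X)%type.

Definition kgen (y : gen_index) : S :=
  match y with inl (l, x) => r l ** g x ** e | inr x => corner (g x) end.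

(* [c] lies in the row of [g x1] and in the column of [g l]. *)
Definition in_cell (x1 l : X) (c : S) : Prop := u x1 ** c = c /\ c ** r l = c.

Lemma corner_local c : K (corner c).
Proof. exact: local_group_corner. Qed.

Lemma kgen_local y : K (kgen y).
Proof.
case: y => [[l x]|x] /=; last exact: corner_local.
by split; rewrite -?mA ?ee // (eq_mulA mA (er l)).
Qed.

Lemma K_step a y : K a -> K (a ** kgen y).
Proof. by move=> [ea ae]; have [ek ke] := kgen_local y; split; rewrite ?mA ?ea -?mA ?ke. Qed.

Lemma corner_mul l c x : c ** r l = c -> corner (c ** g x) = corner c ** kgen (inl (l, x)).
Proof. by move=> cr; rewrite /corner /= -!mA (eq_mulA mA (er l)) (eq_mulA mA cr). Qed.

Lemma cell_gen x : in_cell x x (g x).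
Proof. by split; [apply: ug | apply: gr]. Qed.

Lemma cell_mul x1 l c x : in_cell x1 l c -> in_cell x1 x (c ** g x).
Proof. by case=> uc _; split; rewrite ?mA ?uc // -mA gr. Qed.

Lemma cell_eq x1 l c : in_cell x1 l c -> c = u x1 ** corner c ** r l.
Proof. by case=> uc cr; rewrite /corner -!mA er (eq_mulA mA (ue x1)) cr uc. Qed.

Lemma cell_of_mul x1 mu l c x : in_cell x1 mu (c ** g x) -> c ** r l = c ->
  in_cell x1 l c /\ col x mu.
Proof.
case=> ucx cxr cr; split; last exact/colP/(right_unit_mull mA csS cxr).
by split=> //; apply: (left_unit_mulr mA csS ucx).
Qed.

Lemma last_column c : exists l, c ** r l = c.
Proof.
have [x [w <-]] := gen c; case/lastP: w => [|w l]; first by exists x; apply: gr.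
by exists l; rewrite /eval_from foldl_rcons -mA gr.
Qed.

Lemma eval_corner w c l : c ** r l = c ->
  exists v, eval_from m kgen (corner c) v = corner (eval_from m g c w).
Proof.
elim: w c l => [|x w IH] c l cr; first by exists [::].
have cxr : c ** g x ** r x = c ** g x by rewrite -mA gr.
have [v vE] := IH (c ** g x) x cxr.
by exists (inl (l, x) :: v); rewrite /= -corner_mul.
Qed.

Lemma mon_generates_kgen : mon_generates m K e kgen.
Proof.
split=> [y|a [ea ae]]; first exact: kgen_local.
have [x [w aE]] := gen a; have [v vE] := eval_corner w (gr x).
exists (inr x :: v); rewrite /= (proj1 (kgen_local (inr x))) vE aE.
by rewrite /corner ea ae.
Qed.

Lemma cell_unmul x1 mu l c x a : in_cell x1 mu c -> K a ->
  corner c = a ** kgen (inl (l, x)) -> col x mu ->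
  [/\ in_cell x1 l (u x1 ** a ** r l), corner (u x1 ** a ** r l) = a
    & c = u x1 ** a ** r l ** g x].
Proof.
move=> cc [ea ae] cE /colP gxr; split.
- have uu : u x1 ** u x1 = u x1 by rewrite -{1}(ue x1) -mA eu ue.
  have rr : r l ** r l = r l by rewrite -{2}(er l) mA re er.
  by split; rewrite ?mA ?uu // -mA rr.
- by rewrite /corner -!mA re (eq_mulA mA (eu x1)) ae ea.
- by rewrite {1}(cell_eq cc) cE /= -!mA er gxr.
Qed.

Lemma cell_return x1 mu c x : in_cell x1 mu c -> corner c = e ** corner (g x) ->
  col x mu -> row x1 x -> c = g x.
Proof.
move=> cc cE /colP gxr /rowP ugx.
rewrite {1}(cell_eq cc) cE /corner -!mA (eq_mulA mA ee) er.
by rewrite (eq_mulA mA (ue x1)) gxr ugx.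
Qed.

Definition state : finType := (bool + (X * X))%type.
Definition edge : Type := (state * seq (gen_index + gen_index) * seq (X + X) * state)%type.

(* [inl false] waits at the identity of [S^1], [inl true] accepts, and
   [inr (x1, l)] follows an excursion whose current vertex lies in the cell
   [(x1, l)], where it is determined by its corner.  A backward letter [x] can
   only be read from a vertex in the column of [g x], and it returns to the
   identity exactly when that vertex is [g x] itself. *)
Definition edges_at (t : X * X * X * X) : seq edge :=
  let: (x1, mu, l, x) := t in
  [:: (inl false, [:: inl (inr x)], [:: inl x], inr (x, x));
      (inr (x1, mu), [:: inl (inl (mu, x))], [:: inl x], inr (x1, x))] ++
  if col x mu then
    (inr (x1, mu), [:: inr (inl (l, x))], [:: inr x], inr (x1, l)) ::
    (if row x1 x then [:: (inr (x1, mu), [:: inr (inr x)], [:: inr x], inl true)] else [::])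
  else [::].

Definition edges : seq edge :=
  flatten [seq edges_at t | t <- enum ((X * X * X * X)%type : finType)].

Definition accepting : pred state := pred1 (inl true).

Definition excursion (v : seq (gen_index + gen_index)) (w : seq (X + X)) : Prop :=
  trans_acc edges accepting (inl false) v w.

Lemma rational_excursion : rational_transduction excursion.
Proof. by exists state, edges, (inl false), accepting. Qed.

Lemma edges_at_edges t ep : ep \in edges_at t -> ep \in edges.
Proof. by move=> ept; apply/flatten_mapP; exists t; rewrite ?mem_enum. Qed.

Lemma edgesP q a b q' : (q, a, b, q') \in edges ->
  [\/ exists x, [/\ q = inl false, a = [:: inl (inr x)], b = [:: inl x] & q' = inr (x, x)],
      exists x1 mu x, [/\ q = inr (x1, mu), a = [:: inl (inl (mu, x))], b = [:: inl x]
                        & q' = inr (x1, x)],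
      exists x1 mu l x, [/\ q = inr (x1, mu), a = [:: inr (inl (l, x))], b = [:: inr x],
                          q' = inr (x1, l) & col x mu] |
      exists x1 mu x, [/\ q = inr (x1, mu), a = [:: inr (inr x)], b = [:: inr x],
                        q' = inl true & col x mu && row x1 x]].
Proof.
move=> /flatten_mapP [[[[x1 mu] l] x] _]; rewrite /edges_at mem_cat !inE.
case/orP=> [/orP [/eqP [-> -> -> ->] | /eqP [-> -> -> ->]] | ].
- by constructor 1; exists x.
- by constructor 2; exists x1, mu, x.
case cxm: (col x mu) => //; rewrite inE; case/orP=> [/eqP [-> -> -> ->] | ].
  by constructor 3; exists x1, mu, l, x.
case rxx: (row x1 x) => //; rewrite inE => /eqP [-> -> -> ->].
by constructor 4; exists x1, mu, x; rewrite cxm rxx.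
Qed.

Lemma accepting_nil v w : trans_acc edges accepting (inl true) v w -> v = [::] /\ w = [::].
Proof.
move=> acc; inversion acc as [|q a b q' v' w' ep]; subst => //.
by case: (edgesP ep) => [[? [//]] | [? [? [? [//]]]] | [? [? [? [? [//]]]]] | [? [? [? [//]]]]].
Qed.

Lemma excursion_sound q v w : trans_acc edges accepting q v w ->
  (forall x1 l c, q = inr (x1, l) -> in_cell x1 l c ->
     lpath m K kgen (corner c) v e -> path1 (Some c) w None) /\
  (q = inl false -> lpath m K kgen e v e -> path1 None w None).
Proof.
elim=> {q v w} [q /eqP -> | q a b q' v w /edgesP ep acc [IH1 IH2]]; first by split.
case: ep => [[x [? ? ? ?]] | [x1 [mu [x [? ? ? ?]]]]
           | [x1 [mu [l [x [? ? ? ? cxm]]]]] | [x1 [mu [x [? ? ? ? /andP [cxm rxx]]]]]]; subst.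
- split=> [? ? ? // | _ /= pv]; have {}pv := lpath_fwdE pv.
  rewrite (proj1 (kgen_local (inr x))) in pv.
  by apply: lpath_fwd => //=; exact: (IH1 x x (g x) erefl (cell_gen x) pv).
- split=> [_ _ c [<- <-] cc /= pv | //]; have {}pv := lpath_fwdE pv.
  rewrite -corner_mul ?(proj2 cc) // in pv.
  by apply: lpath_fwd => //=; apply: (IH1 x1 x _ erefl (cell_mul x cc) pv).
- split=> [_ _ c [<- <-] cc /= pv | //]; have [a ca {}pv] := lpath_bwdE pv.
  have [c0c c0a ->] := cell_unmul cc (lpath_head K_step pv) ca cxm.
  rewrite -c0a in pv.
  by apply: (lpath_bwd (a := Some _)) => //; apply: (IH1 x1 l _ erefl c0c pv).
- split=> [_ _ c [<- <-] cc /= pv | //]; have [a ca pa] := lpath_bwdE pv.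
  have [? ?] := accepting_nil acc; subst v w; rewrite (lpath_nilE pa) in ca.
  rewrite (cell_return cc ca cxm rxx).
  by apply: (lpath_bwd (a := None)) => //; apply: lpath_nil.
Qed.

Lemma excursion_complete a w b : path1 a w b -> forall x1 l c,
  a = Some c -> b = None -> in_cell x1 l c ->
  exists p q v, [/\ w = p ++ q, trans_acc edges accepting (inr (x1, l)) v p,
                   lpath m K kgen (corner c) v e & path1 None q None].
Proof.
elim=> {a w b} [a _ | a x w b _ _ IH | a x w b _ pw IH] x1 l c aE bE cc.
- by rewrite aE in bE.
- subst a; have [p [q [v [-> acc pv pq]]]] := IH x1 x _ erefl bE (cell_mul x cc).
  exists (inl x :: p), q, (inl (inl (l, x)) :: v); split=> //.
    apply: (trans_acc_cons_eq (a := [:: inl (inl (l, x))]) (b := [:: inl x]) _ acc) => //.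
    apply: (@edges_at_edges (x1, l, x, x)).
    by rewrite !inE eqxx orbT.
  by apply: lpath_fwd (corner_local c) _; rewrite -corner_mul ?(proj2 cc).
case: a aE pw IH => [c0 [cE] pw IH | [cE] pw _].
  subst c; have [l' c0r] := last_column c0; have [c0c cxl] := cell_of_mul cc c0r.
  have [p [q [v [-> acc pv pq]]]] := IH x1 l' c0 erefl bE c0c.
  exists (inr x :: p), q, (inr (inl (l', x)) :: v); split=> //.
    apply: (trans_acc_cons_eq (a := [:: inr (inl (l', x))]) (b := [:: inr x]) _ acc) => //.
    apply: (@edges_at_edges (x1, l, l', x)).
    by rewrite /edges_at cxl !inE eqxx orbT.
  by rewrite (corner_mul _ c0r); apply: lpath_bwd pv; apply: corner_local.
subst b c; case: cc => /rowP rxx /colP cxl.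
exists [:: inr x], w, [:: inr (inr x)]; split=> //.
  apply: (trans_acc_cons_eq (a := [:: inr (inr x)]) (b := [:: inr x]) (q' := inl true)
           _ (trans_acc_nil _ _)) => //.
  apply: (@edges_at_edges (x1, l, l, x)).
  by rewrite /edges_at cxl rxx !inE eqxx !orbT.
rewrite -[corner (g x)](proj1 (kgen_local (inr x))).
by apply: lpath_bwd (conj ee ee) (lpath_nil _ _ (conj ee ee)).
Qed.

Definition excursions : language (X + X)%type :=
  trans_image excursion (monoid_loop_problem m K e kgen).

Lemma excursions_loop w : excursions w -> path1 None w None.
Proof. by case=> v [pv acc]; apply: (proj2 (excursion_sound acc)). Qed.

Lemma loop_excursions w : path1 None w None -> kleene_star excursions w.
Proof.
elim: {w}(size w).+1 {-2}w (ltnSn (size w)) => // n IH [|[x|x] w] wn pw.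
- by exists [::].
- have [p [q [v [wE acc pv pq]]]] :=
    excursion_complete (lpath_fwdE pw) erefl erefl (cell_gen x).
  subst w; have [|ws [wsE <-]] := IH q _ pq.
    by move: wn; rewrite /= size_cat ltnS; apply: leq_ltn_trans; apply: leq_addl.
  exists ((inl x :: p) :: ws); split=> //.
  move=> w'; rewrite inE => /orP [/eqP -> | /wsE //].
  exists (inl (inr x) :: v); split.
    by apply: lpath_fwd (conj ee ee) _; rewrite (proj1 (kgen_local (inr x))).
  apply: (trans_acc_cons_eq (a := [:: inl (inr x)]) (b := [:: inl x]) _ acc) => //.
  by apply: (@edges_at_edges (x, x, x, x)); rewrite !inE eqxx.
- by have [[c|] cE _] := lpath_bwdE pw.
Qed.

Lemma semigroup_loop_problem_star : semigroup_loop_problem m g = kleene_star excursions.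
Proof.
apply: lang_ext => w; split; first exact: loop_excursions.
case=> ws [wsE <-]; elim: ws wsE => [|w' ws IH] wsE /=; first exact: lpath_nil.
apply: lpath_cat (excursions_loop (wsE _ (mem_head _ _))) (IH _) => w'' w''ws.
by apply: wsE; rewrite inE w''ws orbT.
Qed.

End SemigroupFromSubgroup.

Lemma monoid_loop_problem_as_word_problem (S : Type) (m : S -> S -> S) (H : S -> Prop)
    (e : S) (Y : finType) (h : Y -> S) :
  associative_op m -> subgroup_with_id m H e -> mon_generates m H e h ->
  exists h' : (Y + Y)%type -> S,
    mon_generates m H e h' /\ monoid_loop_problem m H e h = group_word_problem m e h'.
Proof.
move=> mA He hgen; have hH := proj1 hgen.
have [inv inv_h] : exists inv : Y -> S,
    forall y, [/\ H (inv y), m (h y) (inv y) = e & m (inv y) (h y) = e].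
  apply: (choice (fun y b => [/\ H b, m (h y) b = e & m b (h y) = e])) => y.
  by have [b [Hb [hb bh]]] := proj2 (proj2 (proj2 He)) _ (hH y); exists b.
exists (signed h inv); split; first exact: mon_generates_signed.
exact: monoid_loop_problem_signed.
Qed.

Lemma semigroup_loop_problem_decomposition (S : Type) (m : S -> S -> S)
    (X : finType) (g : X -> S) :
  associative_op m -> completely_simple m -> sgp_generates m g ->
  exists e, m e e = e /\
  exists (Y : finType) (h : Y -> S), mon_generates m (local_group m e) e h /\
  exists rho : seq (Y + Y) -> seq (X + X) -> Prop, rational_transduction rho /\
    semigroup_loop_problem m g =
    kleene_star (trans_image rho (monoid_loop_problem m (local_group m e) e h)).
Proof.
move=> mA csS gen; have [_ [e [ee _]]] := csS.
have [r r_conn] := choice _ (fun x => right_connector mA csS ee (g x)).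
have [u u_conn] := choice _ (fun x => left_connector mA csS ee (g x)).
exists e; split=> //; exists (gen_index X), (kgen m g e r).
split; first exact: mon_generates_kgen.
exists (excursion (fun x l => decide (m (g x) (r l) = g x))
                  (fun x1 x => decide (m (u x1) (g x) = g x))).
split; first exact: rational_excursion.
by apply: (semigroup_loop_problem_star mA csS gen ee r_conn u_conn) => *; apply: decideP.
Qed.

Theorem theorem5p6 (F : lang_family)
  (HFrat : closed_under_rational_transduction F)
  (HFstar : closed_under_kleene F)
  (S : Type) (m : S -> S -> S) (Hassoc : associative_op m)
  (Hcs : completely_simple m)
  (X : finType) (g : X -> S) (Hgen : sgp_generates m g) :
  [<-> F (X + X)%type (semigroup_loop_problem m g);
       forall H : S -> Prop, maximal_subgroup m H ->
         forall e : S, subgroup_with_id m H e ->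
         forall (Y : finType) (h : Y -> S), mon_generates m H e h ->
           F (Y + Y)%type (monoid_loop_problem m H e h);
       forall H : S -> Prop, maximal_subgroup m H ->
         forall e : S, subgroup_with_id m H e ->
         forall (Y : finType) (h : Y -> S), mon_generates m H e h ->
           F Y (group_word_problem m e h)].
Proof.
tfae.
- move=> FS H Hmax e He Y h hgen; have [word word_eval] := exists_words Hgen.
  rewrite (subgroup_loop_problem_image Hassoc Hcs word_eval Hmax He hgen).
  exact: HFrat (rational_hom_rel _ _ _) FS.
- move=> FL H Hmax e He Y h hgen.
  rewrite (group_word_problem_image He (proj1 hgen)).
  exact: HFrat (rational_hom_rel _ _ _) (FL _ Hmax _ He _ _ hgen).
- move=> FW; have [e [ee [Y [h [hgen [rho [rho_rat ->]]]]]]] :=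
    semigroup_loop_problem_decomposition Hassoc Hcs Hgen.
  apply/HFstar/(HFrat _ _ _ _ rho_rat).
  have He := local_group_subgroup Hassoc Hcs ee.
  have [h' [h'gen ->]] := monoid_loop_problem_as_word_problem Hassoc He hgen.
  exact: FW _ (local_group_maximal Hassoc Hcs ee) _ He _ _ h'gen.
Qed.
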